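(* Let $n\ge2$ and let $a,b$ be positive integers with $a<n-1$ and $b<n$. For all $l\in\mathcal{Q}_a$ and $r\in\mathcal{Q}_b$, $$\sum_{q\in\mathcal{Q}_n}\ \sum_{q'\in\mathcal{Q}_{n-1}}\mathbb{P}_q^{q'}\Big(\big\{(L_i,R_i)_{i=0}^{n-1}: L_a=l,\ R_{n-b-1}=r\big\}\Big)\ \le\ 12^{\,2n-b-a-1}.$$
   Context: $\mathcal{Q}_k$ denotes the set of rooted quadrangulations of the sphere with $k$ faces, with the convention that $\mathcal{Q}_0=\{\to\}$ consists of the rooted map with one edge and two vertices; $|\mathcal{Q}_k|=\frac{2\cdot 3^k(2k)!}{k!\,(k+2)!}$, so in particular $|\mathcal{Q}_{k+1}|\le 12|\mathcal{Q}_k|$ for all $k\ge0$. For each $k\ge1$, $g_k:\mathcal{Q}_k\times\mathcal{Q}_{k-1}\to\mathbb{R}_{\ge0}$ is a function such that $\sum_{q'\in\mathcal{Q}_{k-1}}g_k(q,q')=1$ for every $q\in\mathcal{Q}_k$ and $\sum_{q\in\mathcal{Q}_k}g_k(q,q')=|\mathcal{Q}_k|/|\mathcal{Q}_{k-1}|$ for every $q'\in\mathcal{Q}_{k-1}$ (and $g_k(q,q')=0$ unless $q'$ is obtained from $q$ by collapsing a face). For $q\in\mathcal{Q}_n$ and $q'\in\mathcal{Q}_{n-1}$, $\mathbb{P}_q^{q'}$ is the probability measure on the set of sequences $(L_i,R_i)_{i=0}^{n-1}$ with $L_i\in\mathcal{Q}_i$ and $R_i\in\mathcal{Q}_{n-1-i}$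 given by $$\mathbb{P}_q^{q'}\big((L_i,R_i)_{i=0}^{n-1}\big)=g_n(q,R_0)\,1_{L_{n-1}=q'}\prod_{i=0}^{n-2}g_{n-i-1}(R_i,R_{i+1})\,g_{i+1}(L_{i+1},L_i).$$ *)

From HB Require Import structures.
From mathcomp Require Import all_boot all_order all_algebra.
Set Implicit Arguments. Unset Strict Implicit. Unset Printing Implicit Defensive.
Import Order.TTheory GRing.Theory Num.Theory.
Local Open Scope ring_scope.

Section QDefs.
Variable R : realFieldType.
(* Q k : the finite set of rooted quadrangulations with k faces *)
Variable Q : nat -> finType.
(* g m = g_{m+1} : Q_{m+1} x Q_m -> R *)
Variable g : forall m : nat, Q m.+1 -> Q m -> R.

Definition heq (k m : nat) (x : Q k) (y : Q m) : bool :=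
  match k =P m with
  | ReflectT e => eq_rect k Q x m e == y
  | ReflectF _ => false
  end.

Definition gh (k m : nat) (x : Q k) (y : Q m) : R :=
  match m.+1 =P k with
  | ReflectT e => g (eq_rect_r Q x e) y
  | ReflectF _ => 0
  end.

(* sequences (L_i, R_i)_{i=0}^{n-1} with L_i in Q_i, R_i in Q_{n-1-i} *)
Definition QSeq (n : nat) :=
  {dffun forall i : 'I_n, (Q i * Q (n - 1 - i))%type}.

Definition Pqq (n : nat) (q : Q n) (q' : Q n.-1) (s : QSeq n) : R :=
  (\prod_(j : 'I_n | val j == 0%N) gh q (s j).2)
  * ([forall i : 'I_n, (val i == n - 1)%N ==> heq (s i).1 q'])%:R
  * \prod_(i : 'I_n) \prod_(j : 'I_n | val j == (val i).+1)
       (gh (s i).2 (s j).2 * gh (s j).1 (s i).1).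
End QDefs.

From HB Require Import structures.
From mathcomp Require Import all_boot all_order all_algebra zify ring.
Set Implicit Arguments. Unset Strict Implicit. Unset Printing Implicit Defensive.
Import Order.TTheory GRing.Theory Num.Theory.
Local Open Scope ring_scope.

(* Summing out [q] and [q'], the weight P_q^{q'} factorises into the weight of the right
   chain R_0 -> R_1 -> ... -> R_{n-1}, entered with weight sum_q g_n(q, R_0) <= 12, and the
   weight of the left chain L_{n-1} -> ... -> L_0.  Every kernel g_k has row sums 1 and,
   because |Q_{k+1}| <= 12 |Q_k|, column sums at most 12.  A chain pinned at one position is
   summed backwards from the pin with the column sums and forwards with the row sums: the
   right chain, pinned at R_{n-b-1} = r, costs 12^(n-b), and the left chain, pinned at
   L_a = l but running against the direction of g, costs 12^(n-1-a). *)

Section QuadCount.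
Local Open Scope nat_scope.

Definition quad_count k := 2 * 3 ^ k * (2 * k)`! %/ (k`! * (k.+2)`!).

Lemma quad_countS k :
  quad_count k.+1 =
  (2 * 3 ^ k * (2 * k)`! * (6 * (2 * k + 1))) %/ (k`! * (k.+2)`! * (k + 3)).
Proof.
rewrite /quad_count.
have -> : 2 * k.+1 = (2 * k).+2 by lia.
rewrite !factS expnS.
have -> : k.+3 = k + 3 by lia.
rewrite -[in RHS](@divnMr k.+1) //; congr (_ %/ _).
all: by apply/eqP; rewrite -(eqr_nat int) !(natrM, natrD, natrX, mulrS); apply/eqP; ring.
Qed.

Lemma quad_count_gt k : k < quad_count k.
Proof.
elim: k => [|k IHk] //; rewrite quad_countS.
set N := 2 * 3 ^ k * (2 * k)`!; set D := k`! * (k.+2)`!.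
have D_gt0 : 0 < D by rewrite muln_gt0 !fact_gt0.
have ND : quad_count k * D <= N by rewrite leq_divM.
rewrite leq_divRL; last by rewrite muln_gt0 D_gt0; lia.
apply: (@leq_trans (quad_count k * D * (6 * (2 * k + 1)))); last by rewrite leq_mul2r ND orbT.
have -> : k.+2 * (D * (k + 3)) = k.+2 * (k + 3) * D by ring.
rewrite [leqRHS]mulnAC leq_mul2r; apply/orP; right.
apply: (@leq_trans (k.+1 * (6 * (2 * k + 1)))); first nia.
by rewrite leq_mul2r IHk orbT.
Qed.

(* The exact ratio is 6(2k+1)/(k+3) < 12; the slack absorbs the floors once [k < quad_count k]. *)
Lemma quad_countS_le k : quad_count k.+1 <= 12 * quad_count k.
Proof.
have lt_k_count := quad_count_gt k; rewrite quad_countS.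
set N := 2 * 3 ^ k * (2 * k)`!; set D := k`! * (k.+2)`!.
have D_gt0 : 0 < D by rewrite muln_gt0 !fact_gt0.
have ND : N < (quad_count k).+1 * D by rewrite ltn_ceil.
rewrite -ltnS ltn_divLR; last by rewrite muln_gt0 D_gt0; lia.
apply: (@leq_trans ((quad_count k).+1 * D * (6 * (2 * k + 1)))).
  by rewrite ltn_pmul2r //; lia.
nia.
Qed.

End QuadCount.

Section TupleSums.
Variables (V : nmodType) (T : finType).

Lemma sum_tuple0 (F : 0.-tuple T -> V) : \sum_(t : 0.-tuple T) F t = F [tuple].
Proof. by rewrite (big_pred1 [tuple]) // => t; apply/esym/eqP; exact: tuple0. Qed.

Lemma sum_tupleS m (P : pred (m.+1.-tuple T)) (F : m.+1.-tuple T -> V) :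
  \sum_(t | P t) F t =
  \sum_(x : T) \sum_(t : m.-tuple T | P (cons_tuple x t)) F (cons_tuple x t).
Proof.
rewrite pair_big_dep (reindex (fun p : T * m.-tuple T => cons_tuple p.1 p.2)) //=.
exists (fun t => (thead t, behead_tuple t)) => [[x t] _ | t _] /=.
  by congr (_, _); apply: val_inj.
by rewrite [t in RHS]tuple_eta.
Qed.

End TupleSums.

Section NonnegSums.
Variable R : numDomainType.

Lemma ler_sum_inj (I J : finType) (f : I -> J) (P : pred I) (P' : pred J) (F : J -> R) :
  injective f -> (forall j, 0 <= F j) -> (forall i, P i -> P' (f i)) ->
  \sum_(i | P i) F (f i) <= \sum_(j | P' j) F j.
Proof.
move=> f_inj F_ge0 PP'; set S := f @: [set i | P i].
have -> : \sum_(i | P i) F (f i) = \sum_(j in S) F j.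
  rewrite big_imset /=; last by move=> x y _ _ /f_inj.
  by apply: eq_bigl => i; rewrite inE.
have S_P' j : (j \in S) = P' j && (j \in S).
  case: (boolP (j \in S)) => [/imsetP[i] | _]; last by rewrite andbF.
  by rewrite inE => /PP' P'fi ->; rewrite P'fi.
rewrite (eq_bigl _ _ S_P') [leRHS](bigID (mem S)) /=.
by rewrite ler_wpDr ?sumr_ge0.
Qed.

Lemma ler_sum_ord_single N (c : nat) (F : 'I_N -> R) (B : R) : 0 <= B ->
  (forall i, val i != c -> F i = 0) -> (forall i, F i <= B) -> \sum_i F i <= B.
Proof.
move=> B_ge0 F0 FB; case: (ltnP c N) => [cN | Nc].
  by rewrite (bigD1 (Ordinal cN)) //= big1 ?addr0.
by rewrite big1 // => i _; apply: F0; apply: contraTneq Nc => <-; rewrite -ltnNge ltn_ord.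
Qed.

End NonnegSums.

Lemma prod_ord_succ (R : pzSemiRingType) N (F : 'I_N.+1 -> 'I_N.+1 -> R) :
  \prod_(i : 'I_N.+1) \prod_(j : 'I_N.+1 | val j == (val i).+1) F i j =
  \prod_(k < N) F (inord k) (inord k.+1).
Proof.
rewrite big_ord_recr /= [X in _ * X]big_pred0 ?mulr1; last first.
  by move=> j; rewrite /= eqn_leq andbC leqNgt ltn_ord.
apply: eq_bigr => i _; rewrite (big_pred1 (inord i.+1)); last first.
  by move=> j; rewrite /= -val_eqE /= inordK // ltnS.
by congr F; apply: val_inj; rewrite /= inordK // ltnS ltnW.
Qed.

Section Chains.
Variables (R : numDomainType) (T : finType).
Variables (A : T -> T -> R) (e : T -> R).

Fixpoint chain_weight (x : T) (s : seq T) : R :=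
  if s is y :: s' then A x y * chain_weight y s' else e x.

Lemma chain_weight_iota (f : nat -> T) j k :
  chain_weight (f k) (map f (iota k.+1 j)) =
  (\prod_(i < j) A (f (k + i)%N) (f (k + i).+1)) * e (f (k + j)%N).
Proof.
elim: j k => [|j IHj] k; first by rewrite big_ord0 mul1r addn0.
rewrite /= IHj big_ord_recl addn0 -mulrA; congr (_ * (_ * _)).
  by apply: eq_bigr => i _; rewrite addSnnS.
by rewrite addSnnS.
Qed.

Variables (Cf Cb E : R).
Hypothesis A_ge0 : forall x y, 0 <= A x y.
Hypothesis e_ge0 : forall x, 0 <= e x.
Hypothesis e_le : forall x, e x <= E.
Hypothesis sum_fwd_le : forall x, \sum_y A x y <= Cf.
Hypothesis sum_bwd_le : forall y, \sum_x A x y <= Cb.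
Hypothesis Cf_ge0 : 0 <= Cf.
Hypothesis Cb_ge0 : 0 <= Cb.

Lemma chain_weight_ge0 x s : 0 <= chain_weight x s.
Proof. by elim: s x => [|y s IHs] x /=; rewrite ?mulr_ge0. Qed.

Lemma sum_chain_weight_le m x : \sum_(t : m.-tuple T) chain_weight x t <= Cf ^+ m * E.
Proof.
have E_ge0 : 0 <= E := le_trans (e_ge0 x) (e_le x).
elim: m x => [|m IHm] x; first by rewrite sum_tuple0 /= expr0 mul1r.
rewrite (sum_tupleS xpredT) /=.
apply: (@le_trans _ _ (\sum_y A x y * (Cf ^+ m * E))).
  by apply: ler_sum => y _; rewrite -mulr_sumr ler_wpM2l.
by rewrite -mulr_suml exprS -mulrA ler_wpM2r ?mulr_ge0 ?exprn_ge0.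
Qed.

(* Summing out the first vertex moves the pin one step closer at the cost of a backward sum;
   once the pin is at the start, the rest of the path is summed forwards. *)
Lemma sum_pinned_chain_weight_le p m (H : R) (h : T -> R) (x : T) :
  (p <= m)%N -> 0 <= H -> (forall y, 0 <= h y) -> (forall y, h y <= H) ->
  \sum_y \sum_(t : m.-tuple T | nth y (y :: t) p == x) h y * chain_weight y t
    <= H * Cb ^+ p * Cf ^+ (m - p) * E.
Proof.
elim: p m H h => [|p IHp] m H h le_pm H_ge0 h_ge0 h_le.
  rewrite (bigD1 x) //= [X in _ + X]big1 ?addr0 => [|y yx]; last first.
    by rewrite big_pred0 // => t /=; apply: negbTE.
  under eq_bigl => t do rewrite /= eqxx.
  rewrite -mulr_sumr expr0 mulr1 subn0 -mulrA.
  by rewrite ler_pM ?sumr_ge0 ?sum_chain_weight_le // => t _; apply: chain_weight_ge0.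
case: m le_pm => // m le_pm.
pose h' z := \sum_y h y * A y z.
have shift y : \sum_(t : m.+1.-tuple T | nth y (y :: t) p.+1 == x) h y * chain_weight y t =
    \sum_z \sum_(t : m.-tuple T | nth z (z :: t) p == x) h y * A y z * chain_weight z t.
  rewrite (sum_tupleS (fun t => nth y (y :: t) p.+1 == x)).
  apply: eq_bigr => z _; apply: eq_big => [t | t _] /=; last by rewrite mulrA.
  by rewrite (set_nth_default z) //= size_tuple.
under eq_bigr => y _ do rewrite shift.
rewrite exchange_big /=.
under eq_bigr => z _ do rewrite exchange_big /= -/(h' z).
under eq_bigr => z _ do under eq_bigr => t _ do rewrite -mulr_suml.
rewrite subSS exprS !mulrA; apply: IHp => // [|z|z]; first exact: mulr_ge0.
  by rewrite sumr_ge0 // => y _; rewrite mulr_ge0.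
apply: (@le_trans _ _ (\sum_y H * A y z)); first by apply: ler_sum => y _; rewrite ler_wpM2r.
by rewrite -mulr_sumr ler_wpM2l.
Qed.

End Chains.

Section Quadrangulations.
Variables (R : realFieldType) (Q : nat -> finType).
Variable g : forall m : nat, Q m.+1 -> Q m -> R.
Hypothesis g_ge0 : forall m (q : Q m.+1) (q' : Q m), 0 <= g q q'.
Hypothesis g_row : forall m (q : Q m.+1), \sum_(q' : Q m) g q q' = 1.
Hypothesis g_col : forall m (q' : Q m),
  \sum_(q : Q m.+1) g q q' = #|Q m.+1|%:R / #|Q m|%:R.
Hypothesis card_Q_ratio : forall k, (#|Q k.+1| <= 12 * #|Q k|)%N.

Lemma gh_ge0 k j (x : Q k) (y : Q j) : 0 <= gh g x y.
Proof. by rewrite /gh; case: eqP. Qed.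

Lemma sum_gh_row k j (x : Q k) : \sum_(y : Q j) gh g x y = (j.+1 == k)%:R.
Proof. by rewrite /gh; case: eqP => [e | _]; rewrite ?g_row ?big1. Qed.

Lemma sum_gh_col_le k j (y : Q j) : \sum_(x : Q k) gh g x y <= 12.
Proof.
rewrite /gh; case: eqP => [e | _]; last by rewrite big1 ?ler0n.
subst k; rewrite /= g_col.
have [-> | cardQ_neq0] := eqVneq #|Q j| 0%N; first by rewrite invr0 mulr0 ler0n.
by rewrite ler_pdivrMr ?ltr0n ?lt0n // -natrM ler_nat.
Qed.

Lemma sum_gh_col_eq0 k j (y : Q j) : k != j.+1 -> \sum_(x : Q k) gh g x y = 0.
Proof.
move=> kj; rewrite big1 // => x _; rewrite /gh; case: eqP => // e.
by rewrite e eqxx in kj.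
Qed.

Lemma sum_heq_le1 k j (x : Q k) : \sum_(y : Q j) (heq x y)%:R <= 1 :> R.
Proof.
rewrite /heq; case: eqP => e; last by rewrite big1.
rewrite (bigD1 (eq_rect k Q x j e)) //= eqxx big1 ?addr0 // => y yx.
by rewrite eq_sym (negbTE yx).
Qed.

Section Tagged.
Variable m : nat.

(* Quadrangulations of all sizes up to [m + 2], packed into one finite type so that both
   chains become paths in a single weighted graph. *)
Definition Qtag := {k : 'I_m.+3 & Q k}.

Definition tagQ k (lt_km : (k < m.+3)%N) (x : Q k) : Qtag :=
  Tagged (fun i : 'I_m.+3 => Q i) (x : Q (Ordinal lt_km)).

Definition Gtag (u v : Qtag) : R := gh g (tagged u) (tagged v).

Lemma tagQ_heq k j (lt_km : (k < m.+3)%N) (lt_jm : (j < m.+3)%N) (x : Q k) (y : Q j) :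
  heq x y -> tagQ lt_km x = tagQ lt_jm y.
Proof.
rewrite /heq; case: eqP => // e; subst j => /= /eqP ->.
by rewrite /tagQ (bool_irrelevance lt_km lt_jm).
Qed.

Lemma tagQ_inj k (lt_km : (k < m.+3)%N) : injective (tagQ lt_km).
Proof.
move=> x y exy; have := tagged_asE (u := tagQ lt_km x) y.
by rewrite -/(tagQ lt_km y) -exy (tagged_asE (u := tagQ lt_km x) x).
Qed.

Lemma sum_Qtag (F : Qtag -> R) :
  \sum_(v : Qtag) F v = \sum_(i : 'I_m.+3) \sum_(y : Q i) F (Tagged (fun i : 'I_m.+3 => Q i) y).
Proof. by rewrite sig_big_dep /=; apply: eq_bigr => -[i y]. Qed.

Lemma Gtag_ge0 u v : 0 <= Gtag u v.
Proof. exact: gh_ge0. Qed.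

Lemma sum_Gtag_row_le1 u : \sum_v Gtag u v <= 1.
Proof.
rewrite sum_Qtag; apply: (@ler_sum_ord_single _ _ (tag u).-1) => // i.
  move=> iu; rewrite /Gtag /= sum_gh_row; case: eqP => // ei.
  by rewrite -ei eqxx in iu.
by rewrite /Gtag /= sum_gh_row lern1 leq_b1.
Qed.

Lemma sum_Gtag_col_le12 v : \sum_u Gtag u v <= 12.
Proof.
rewrite sum_Qtag; apply: (@ler_sum_ord_single _ _ (tag v).+1) => // i.
  exact: sum_gh_col_eq0.
exact: sum_gh_col_le.
Qed.

Definition chain_of (f : 'I_m.+2 -> Qtag) : Qtag * (m.+1).-tuple Qtag :=
  (f ord0, [tuple f (lift ord0 j) | j < m.+1]).

Lemma chain_of_tuple (f : 'I_m.+2 -> Qtag) :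
  [seq f (lift ord0 j) | j <- enum 'I_m.+1] = [seq f (inord k) | k <- iota 1 m.+1].
Proof.
rewrite -[1%N]/(1 + 0)%N iotaDl -map_comp -val_enum_ord -map_comp.
by apply: eq_map => j /=; congr f; apply: val_inj; rewrite /= add1n inordK // ltnS.
Qed.

Lemma chain_of_head f : (chain_of f).1 = f (inord 0).
Proof. by congr f; apply: val_inj; rewrite /= inordK. Qed.

Lemma chain_of_iota f :
  (chain_of f).1 :: (chain_of f).2 = map (fun k => f (inord k)) (iota 0 m.+2).
Proof. by rewrite chain_of_head [tval _]/= chain_of_tuple. Qed.

Definition chain_at (z : Qtag * (m.+1).-tuple Qtag) p : Qtag := nth z.1 (z.1 :: z.2) p.

Lemma chain_at_chain_of f p : (p < m.+2)%N -> chain_at (chain_of f) p = f (inord p).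
Proof. by move=> lt_pm; rewrite /chain_at chain_of_iota (nth_map 0%N) ?size_iota // nth_iota. Qed.

Lemma chain_of_inj f1 f2 : chain_of f1 = chain_of f2 -> f1 =1 f2.
Proof. by move=> f12 i; rewrite -(inord_val i) -!chain_at_chain_of // f12. Qed.

Lemma chain_weight_chain_of (A : Qtag -> Qtag -> R) (e : Qtag -> R) f :
  chain_weight A e (chain_of f).1 (chain_of f).2 =
  (\prod_(i < m.+1) A (f (inord i)) (f (inord i.+1))) * e (f ord_max).
Proof.
rewrite chain_of_head [tval _]/= chain_of_tuple.
rewrite (chain_weight_iota _ _ (fun k => f (inord k))) add0n.
by congr (_ * e (f _)); apply: val_inj; rewrite /= inordK.
Qed.

Lemma lt_right_index (i : 'I_m.+2) : (m.+2 - 1 - i < m.+3)%N.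
Proof. lia. Qed.

Lemma lt_left_index (i : 'I_m.+2) : (i < m.+3)%N.
Proof. exact: ltnW (ltn_ord i). Qed.

Definition right_tag (s : QSeq Q m.+2) i : Qtag := tagQ (lt_right_index i) (s i).2.
Definition left_tag (s : QSeq Q m.+2) i : Qtag := tagQ (lt_left_index i) (s i).1.

Definition chains (s : QSeq Q m.+2) := (chain_of (right_tag s), chain_of (left_tag s)).

Lemma chains_inj : injective chains.
Proof.
move=> s1 s2 s12; apply/ffunP => i; apply: injective_projections.
  exact: tagQ_inj (chain_of_inj (congr1 snd s12) i).
exact: tagQ_inj (chain_of_inj (congr1 fst s12) i).
Qed.

(* Summing [q] turns the first factor of [Pqq] into an entrance weight of the right chain;
   summing [q'] turns the indicator of [L_(n-1) = q'] into an exit weight of the left chain. *)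
Definition entry_weight (v : Qtag) : R := \sum_(q : Q m.+2) gh g q (tagged v).
Definition exit_weight (u : Qtag) : R := \sum_(q' : Q m.+1) (heq (tagged u) q')%:R.

Lemma entry_weight_ge0 v : 0 <= entry_weight v.
Proof. by rewrite sumr_ge0 // => q _; apply: gh_ge0. Qed.

Lemma entry_weight_le12 v : entry_weight v <= 12.
Proof. exact: sum_gh_col_le. Qed.

Lemma exit_weight_ge0 u : 0 <= exit_weight u.
Proof. by rewrite sumr_ge0. Qed.

Lemma exit_weight_le1 u : exit_weight u <= 1.
Proof. exact: sum_heq_le1. Qed.

Definition right_weight (z : Qtag * (m.+1).-tuple Qtag) : R :=
  entry_weight z.1 * chain_weight Gtag (fun=> 1) z.1 z.2.
Definition left_weight (z : Qtag * (m.+1).-tuple Qtag) : R :=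
  chain_weight (fun u v => Gtag v u) exit_weight z.1 z.2.

Lemma right_weight_ge0 z : 0 <= right_weight z.
Proof.
by rewrite mulr_ge0 ?entry_weight_ge0 ?chain_weight_ge0 //; apply: Gtag_ge0.
Qed.

Lemma left_weight_ge0 z : 0 <= left_weight z.
Proof.
by apply: chain_weight_ge0 => [u v|]; [apply: Gtag_ge0 | apply: exit_weight_ge0].
Qed.

Lemma sum_Pqq_chains s :
  \sum_(q : Q m.+2) \sum_(q' : Q m.+1) Pqq g q q' s =
  right_weight (chains s).1 * left_weight (chains s).2.
Proof.
rewrite /Pqq /right_weight /left_weight !chain_weight_chain_of mulr1.
have first_step (q : Q m.+2) :
    \prod_(j : 'I_m.+2 | val j == 0%N) gh g q (s j).2 = gh g q (s ord0).2.
  by rewrite (big_pred1 ord0) // => j; rewrite /= -val_eqE.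
have last_step (q' : Q m.+1) :
    [forall i : 'I_m.+2, (val i == m.+2 - 1)%N ==> heq (s i).1 q'] = heq (s ord_max).1 q'.
  apply/forallP/idP => [/(_ ord_max)/implyP | Hq' i]; first by apply; rewrite /= subn1.
  apply/implyP => /eqP ei; have -> : i = ord_max by apply: val_inj; rewrite ei /= subn1.
  exact: Hq'.
have steps : \prod_(i : 'I_m.+2) \prod_(j : 'I_m.+2 | val j == (val i).+1)
      (gh g (s i).2 (s j).2 * gh g (s j).1 (s i).1) =
    (\prod_(k < m.+1) Gtag (right_tag s (inord k)) (right_tag s (inord k.+1))) *
    (\prod_(k < m.+1) Gtag (left_tag s (inord k.+1)) (left_tag s (inord k))).
  by rewrite -big_split (prod_ord_succ
    (fun i j => Gtag (right_tag s i) (right_tag s j) * Gtag (left_tag s j) (left_tag s i))).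
under eq_bigr => q _ do under eq_bigr => q' _ do rewrite first_step last_step steps.
under eq_bigr => q _ do rewrite -mulr_suml -mulr_sumr.
rewrite -mulr_suml -/(exit_weight (left_tag s ord_max)) -mulr_suml.
by rewrite -[\sum_q _]/(entry_weight (chains s).1.1); ring.
Qed.

Lemma chain_at_right_tag (s : QSeq Q m.+2) b (r : Q b) (lt_bm : (b < m.+2)%N) :
    [forall i : 'I_m.+2, (val i == m.+2 - b - 1)%N ==> heq (s i).2 r] ->
  chain_at (chains s).1 (m.+2 - b - 1) = tagQ (ltnW lt_bm) r.
Proof.
move=> /forallP/(_ (inord (m.+2 - b - 1)))/implyP pinned_r.
rewrite chain_at_chain_of; last by lia.
by apply: tagQ_heq; apply: pinned_r; rewrite /= inordK //; lia.
Qed.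

Lemma chain_at_left_tag (s : QSeq Q m.+2) a (l : Q a) (lt_am : (a < m.+2)%N) :
    [forall i : 'I_m.+2, (val i == a) ==> heq (s i).1 l] ->
  chain_at (chains s).2 a = tagQ (ltnW lt_am) l.
Proof.
move=> /forallP/(_ (inord a))/implyP pinned_l.
by rewrite chain_at_chain_of //; apply: tagQ_heq; apply: pinned_l; rewrite /= inordK.
Qed.

Lemma sum_pinned_right_weight_le p x : (p < m.+2)%N ->
  \sum_(z | chain_at z p == x) right_weight z <= 12 ^+ p.+1.
Proof.
move=> lt_pm.
have -> : \sum_(z | chain_at z p == x) right_weight z =
    \sum_y \sum_(t : (m.+1).-tuple Qtag | nth y (y :: t) p == x)
      entry_weight y * chain_weight Gtag (fun=> 1) y t by rewrite pair_big_dep.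
apply: (@le_trans _ _ (12 * 12 ^+ p * 1 ^+ (m.+1 - p) * 1)); last by rewrite expr1n !mulr1 exprS.
by apply: sum_pinned_chain_weight_le => //;
  [exact: Gtag_ge0 | exact: sum_Gtag_row_le1 | exact: sum_Gtag_col_le12
  | exact: entry_weight_ge0 | exact: entry_weight_le12].
Qed.

Lemma sum_pinned_left_weight_le p x : (p < m.+2)%N ->
  \sum_(z | chain_at z p == x) left_weight z <= 12 ^+ (m.+1 - p).
Proof.
move=> lt_pm.
have -> : \sum_(z | chain_at z p == x) left_weight z =
    \sum_y \sum_(t : (m.+1).-tuple Qtag | nth y (y :: t) p == x)
      1 * chain_weight (fun u v => Gtag v u) exit_weight y t.
  by rewrite pair_big_dep; apply: eq_bigr => z _; rewrite mul1r.
apply: (@le_trans _ _ (1 * 1 ^+ p * 12 ^+ (m.+1 - p) * 1)); last by rewrite expr1n !mulr1 mul1r.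
by apply: sum_pinned_chain_weight_le => //;
  [move=> u v; exact: Gtag_ge0 | exact: exit_weight_ge0 | exact: exit_weight_le1
  | exact: sum_Gtag_col_le12 | exact: sum_Gtag_row_le1].
Qed.

Lemma sum_pinned_Pqq_le a b (l : Q a) (r : Q b) : (a < m.+2)%N -> (b < m.+2)%N ->
  \sum_(q : Q m.+2) \sum_(q' : Q m.+1)
     \sum_(s : QSeq Q m.+2 | [forall i : 'I_m.+2, (val i == a) ==> heq (s i).1 l]
                          && [forall i : 'I_m.+2, (val i == m.+2 - b - 1)%N ==> heq (s i).2 r])
        Pqq g q q' s
  <= 12 ^+ (2 * m.+2 - b - a - 1).
Proof.
move=> lt_am lt_bm; set p := (m.+2 - b - 1)%N.
set xR := tagQ (ltnW lt_bm) r; set xL := tagQ (ltnW lt_am) l.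
under eq_bigr => q _ do rewrite exchange_big /=.
rewrite exchange_big /=; under eq_bigr => s _ do rewrite sum_Pqq_chains.
apply: le_trans (ler_sum_inj (P' := fun z => (chain_at z.1 p == xR) && (chain_at z.2 a == xL))
  (F := fun z => right_weight z.1 * left_weight z.2) chains_inj _ _) _.
- by move=> z; rewrite mulr_ge0 ?right_weight_ge0 ?left_weight_ge0.
- move=> s /andP[pinned_l pinned_r].
  by rewrite (chain_at_right_tag lt_bm pinned_r) (chain_at_left_tag lt_am pinned_l) !eqxx.
rewrite [leLHS](_ : _ = \sum_(z1 | chain_at z1 p == xR) \sum_(z2 | chain_at z2 a == xL)
  right_weight z1 * left_weight z2); last by rewrite pair_big_dep.
under eq_bigr do rewrite -mulr_sumr.
rewrite -mulr_suml (_ : (2 * m.+2 - b - a - 1 = p.+1 + (m.+1 - a))%N); last by lia.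
by rewrite exprD ler_pM ?sumr_ge0 ?sum_pinned_right_weight_le ?sum_pinned_left_weight_le //;
  [move=> z _; apply: right_weight_ge0 | move=> z _; apply: left_weight_ge0 | lia].
Qed.

End Tagged.

End Quadrangulations.

Theorem lemma6p1 (R : realFieldType) (Q : nat -> finType)
  (coll : forall m : nat, Q m.+1 -> Q m -> bool)
  (g : forall m : nat, Q m.+1 -> Q m -> R)
  (cardQ : forall k : nat,
     #|Q k| = (2 * 3 ^ k * (2 * k)`! %/ (k`! * (k.+2)`!))%N)
  (g_ge0 : forall m (q : Q m.+1) (q' : Q m), 0 <= g m q q')
  (g_coll : forall m (q : Q m.+1) (q' : Q m), g m q q' != 0 -> coll m q q')
  (g_row : forall m (q : Q m.+1), \sum_(q' : Q m) g m q q' = 1)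
  (g_col : forall m (q' : Q m),
     \sum_(q : Q m.+1) g m q q' = #|Q m.+1|%:R / #|Q m|%:R)
  (n a b : nat) (hn : (2 <= n)%N) (ha : (0 < a)%N) (hb : (0 < b)%N)
  (han : (a < n - 1)%N) (hbn : (b < n)%N) (l : Q a) (r : Q b) :
  \sum_(q : Q n) \sum_(q' : Q n.-1)
     \sum_(s : QSeq Q n | [forall i : 'I_n, (val i == a) ==> heq (s i).1 l]
                          && [forall i : 'I_n, (val i == n - b - 1)%N ==> heq (s i).2 r])
        Pqq g q q' s
  <= (12%:R : R) ^+ (2 * n - b - a - 1).
Proof.
have card_Q_ratio k : (#|Q k.+1| <= 12 * #|Q k|)%N by rewrite !cardQ; apply: quad_countS_le.
case: n hn han hbn => [|[|m]] // _ han hbn.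
by apply: sum_pinned_Pqq_le => //; lia.
Qed.
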